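(* Let $M,N$ be positive integers, let $\Delta>0$ and $T=1/\Delta$, and let $c>0$, $\lambda>0$, $\alpha\in\mathbb{C}$, $v\in\mathbb{R}$. Let $g_{\rm tx},g_{\rm rx}\in L^2(\mathbb{R})$ be (complex-valued) transmit and receive shaping filters, and let $\{X_{\rm TF}[n,m]\}$, $n=0,\dots,N-1$, $m=0,\dots,M-1$, be arbitrary complex numbers. Define, for $n=0,\dots,N-1$, $$x_n(t)=\sum_{m=0}^{M-1}X_{\rm TF}[n,m]\,g_{\rm tx}(t-nT)\,e^{\mathrm{i}2\pi m\Delta(t-nT)}.$$ Let $r:[0,\infty)\to\mathbb{R}$ be any function (the excess target range) and suppose the received signal is (the variation of the target range within each symbol interval being ignored) $$y(t)=\sum_{n=0}^{N-1}\alpha\, x_n\!\left(t-\frac{r(nT)}{c}\right)e^{\mathrm{i}2\pi\frac{v}{\lambda}t}.$$ Define, for $n=0,\dots,N-1$ and $m=0,\dots,M-1$, $$Y_{\rm TF}[n,m]=\int_{-\infty}^{\infty}y(t)\,g_{\rm rx}^{*}(t-nT)\,e^{-\mathrm{i}2\pi m\Delta(t-nT)}\,dt,$$ and the cross-ambiguity function $\gamma(\tau,\nu)=\int_{-\infty}^{\infty}g_{\rm tx}(\beta)\,g_{\rm rx}^{*}(\beta-\tau)\,e^{-\mathrm{i}2\pi\nu(\beta-\tau)}\,d\beta$. Then for all $n=0,\dots,N-1$ and $m=0,\dots,M-1$, $$Y_{\rm TF}[n,m]=\sum_{n'=0}^{N-1}\sum_{m'=0}^{M-1}H_{n,m}[n',m']\,X_{\rm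 TF}[n',m'],$$ where $$H_{n,m}[n',m']=\alpha\, e^{\mathrm{i}2\pi\frac{v}{\lambda}nT}\,e^{-\mathrm{i}2\pi m'\Delta\frac{r(n'T)}{c}}\,\gamma\!\left((n-n')T-\frac{r(n'T)}{c},\,(m-m')\Delta-\frac{v}{\lambda}\right).$$
   Context: $\mathrm{i}$ is the imaginary unit and $(\cdot)^*$ denotes complex conjugation. Physically, $c$ is the speed of light, $\lambda$ the carrier wavelength, $v$ the excess target range-rate, $\alpha$ the target amplitude; $M$ is the number of subcarriers, $N$ the number of symbol intervals, $\Delta$ the subcarrier spacing. *)

From mathcomp Require Import all_boot all_order all_algebra.
From mathcomp Require Import all_classical all_reals all_analysis.
From mathcomp Require Export complex.
Set Implicit Arguments. Unset Strict Implicit. Unset Printing Implicit Defensive.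
Import Order.TTheory GRing.Theory Num.Theory.
Local Open Scope ring_scope.
Local Open Scope complex_scope.

Section Defs.
Variable R : realType.

Definition expi (th : R) : R[i] := cos th +i* sin th.

Definition cintegral (f : R -> R[i]) : R[i] :=
  (Rintegral (@lebesgue_measure R) setT (fun t => complex.Re (f t)))
  +i* (Rintegral (@lebesgue_measure R) setT (fun t => complex.Im (f t))).

Definition L2 (g : R -> R[i]) : Prop :=
  [/\ measurable_fun setT (fun t => complex.Re (g t)),
      measurable_fun setT (fun t => complex.Im (g t)) &
      (@lebesgue_measure R).-integrable setT
        (fun t => ((complex.Re (g t)) ^+ 2 + (complex.Im (g t)) ^+ 2)%:E)].

Variables (M N : nat).

Definition xsig (gtx : R -> R[i]) (X : 'I_N -> 'I_M -> R[i]) (Delta T : R)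
  (n : 'I_N) (t : R) : R[i] :=
  \sum_(m < M) X n m * gtx (t - n%:R * T)
               * expi (2 * pi * m%:R * Delta * (t - n%:R * T)).

Definition ysig (alpha : R[i]) (gtx : R -> R[i]) (X : 'I_N -> 'I_M -> R[i])
  (Delta T c lam v : R) (r : R -> R) (t : R) : R[i] :=
  \sum_(n < N) alpha * xsig gtx X Delta T n (t - r (n%:R * T) / c)
               * expi (2 * pi * (v / lam) * t).

Definition YTF (grx y : R -> R[i]) (Delta T : R) (n : 'I_N) (m : 'I_M) : R[i] :=
  cintegral (fun t => y t * (grx (t - n%:R * T))^*
                        * expi (- (2 * pi * m%:R * Delta * (t - n%:R * T)))).

Definition xambig (gtx grx : R -> R[i]) (tau nu : R) : R[i] :=
  cintegral (fun b => gtx b * (grx (b - tau))^* * expi (- (2 * pi * nu * (b - tau)))).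

Definition Hcoef (alpha : R[i]) (gtx grx : R -> R[i]) (Delta T c lam v : R)
  (r : R -> R) (n : 'I_N) (m : 'I_M) (n' : 'I_N) (m' : 'I_M) : R[i] :=
  alpha * expi (2 * pi * (v / lam) * (n%:R * T))
        * expi (- (2 * pi * m'%:R * Delta * (r (n'%:R * T) / c)))
        * xambig gtx grx ((n%:R - n'%:R) * T - r (n'%:R * T) / c)
                         ((m%:R - m'%:R) * Delta - v / lam).

End Defs.

From mathcomp Require Import all_boot all_order all_algebra.
From mathcomp Require Import all_classical all_reals all_analysis.
From mathcomp Require Import measurable_realfun complex ring lra.
Import Order.TTheory GRing.Theory Num.Theory.
Local Open Scope ring_scope.
Local Open Scope classical_set_scope.
Local Open Scope complex_scope.

(* Expanding y and x_n turns the integrand defining Y_TF[n,m] into a double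
   sum over (n',m'); its (n',m') term is X[n',m'] times a constant phase times
   the cross-ambiguity integrand for the delay (n-n')T - r(n'T)/c and the
   Doppler shift (m-m')Delta - v/lambda, translated by r(n'T)/c + n'T.  The
   phases match only up to e^{i 2 pi m'(n-n')}, which is 1 because Delta T = 1.
   The integral is linear and Lebesgue measure is translation invariant, so it
   remains to see that each term is integrable: the modulus of
   g_tx(b) g_rx(b - tau)^* e^{i theta} is at most
   |g_tx(b)|^2 + |g_rx(b - tau)|^2, and both filters are square integrable. *)

Section lebesgue_translation.
Context {R : realType}.
Local Notation mu := (@lebesgue_measure R).

Lemma measurable_subr (a : R) :
  measurable_fun (T := measurableTypeR R) (U := measurableTypeR R) setT (fun x => x - a).
Proof. exact: measurable_funB. Qed.

Lemma lebesgue_measure_preimage_subr (a : R) (A : set R) : measurable A ->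
  mu ((fun x => x - a) @^-1` A) = mu A.
Proof.
move=> mA; symmetry.
have unique := @lebesgue_measure_unique R (pushforward mu
  ((fun x => x - a) : measurableTypeR R -> measurableTypeR R)).
apply: (unique (measurable_subr a)) mA.
move=> _ [[x y] _ <-] /=; rewrite /pushforward.
have -> : (fun t : R => t - a) @^-1` `]x, y] = `]x + a, y + a].
  by apply/seteqP; split=> t /=; rewrite !in_itv /= ltrBrDr lerBlDr.
rewrite !lebesgue_measure_itv /= !lte_fin ltrD2r; case: ifP => // _.
by rewrite -!EFinD; congr EFin; ring.
Qed.

Local Open Scope ereal_scope.

Lemma integral_pushforward_subr (a : R) (f : R -> \bar R) :
  \int[pushforward mu ((fun x => (x - a)%R) : measurableTypeR R -> measurableTypeR R)]_x f x
  = \int[mu]_x f x.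
Proof.
apply: eq_measure_integral; first exact: measurable_subr.
by move=> ? A mA _; exact: lebesgue_measure_preimage_subr.
Qed.

Lemma ge0_integral_subr (a : R) (f : R -> \bar R) :
  measurable_fun setT f -> (forall x, 0 <= f x) ->
  \int[mu]_x f (x - a)%R = \int[mu]_x f x.
Proof.
move=> mf f0; rewrite -[RHS](integral_pushforward_subr a).
by rewrite (ge0_integral_pushforward (measurable_subr a)).
Qed.

Lemma integrable_subr (a : R) (f : R -> \bar R) :
  mu.-integrable setT f -> mu.-integrable setT (fun x => f (x - a)%R).
Proof.
move=> /integrableP [mf fi]; apply/integrableP; split.
  exact: measurableT_comp mf (measurable_subr a).
by rewrite (ge0_integral_subr a (fun x => `|f x|)) //; exact: measurableT_comp.
Qed.

Lemma integral_subr (a : R) (f : R -> \bar R) :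
  mu.-integrable setT f -> \int[mu]_x f (x - a)%R = \int[mu]_x f x.
Proof.
move=> fi; have [mf _] := integrableP _ _ _ fi.
rewrite -[RHS](integral_pushforward_subr a).
rewrite (integral_pushforward (measurable_subr a) mf) //.
exact: integrable_subr.
Qed.

End lebesgue_translation.

Section complex_algebra.
Context {R : rcfType}.
Implicit Types z w : R[i].

Lemma complexReD z w : complex.Re (z + w) = complex.Re z + complex.Re w.
Proof. by case: z w => a b [c d]. Qed.

Lemma complexImD z w : complex.Im (z + w) = complex.Im z + complex.Im w.
Proof. by case: z w => a b [c d]. Qed.

Lemma complexReM z w :
  complex.Re (z * w) = complex.Re z * complex.Re w - complex.Im z * complex.Im w.
Proof. by case: z w => a b [c d]. Qed.

Lemma complexImM z w :
  complex.Im (z * w) = complex.Re z * complex.Im w + complex.Im z * complex.Re w.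
Proof. by case: z w => a b [c d]. Qed.

Lemma complexReJ z : complex.Re z^* = complex.Re z. Proof. by case: z. Qed.

Lemma complexImJ z : complex.Im z^* = - complex.Im z. Proof. by case: z. Qed.

Definition sqnormc z : R := complex.Re z ^+ 2 + complex.Im z ^+ 2.

Lemma sqnormc_ge0 z : 0 <= sqnormc z.
Proof. by rewrite addr_ge0 ?sqr_ge0. Qed.

Lemma sqnormcM z w : sqnormc (z * w) = sqnormc z * sqnormc w.
Proof. by case: z w => a b [c d]; rewrite /sqnormc /=; ring. Qed.

Lemma sqnormcJ z : sqnormc z^* = sqnormc z.
Proof. by case: z => a b; rewrite /sqnormc /= sqrrN. Qed.

Lemma normr_ReIm_le_sqnormc z (A B : R) :
  0 <= A -> 0 <= B -> sqnormc z <= A * B ->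
  `|complex.Re z| <= A + B /\ `|complex.Im z| <= A + B.
Proof.
case: z => a b; rewrite /sqnormc /= => A0 B0 zAB.
have := sqr_ge0 a; have := sqr_ge0 b; have := sqr_ge0 (A - B).
by split; rewrite ler_norml; apply/andP; split; nra.
Qed.

End complex_algebra.

Section expi.
Context {R : realType}.
Implicit Types x y : R.

Lemma sqnormc_expi x : sqnormc (expi x) = 1.
Proof. exact: cos2Dsin2. Qed.

Lemma expiD x y : expi x * expi y = expi (x + y).
Proof. by rewrite /expi /= cosD sinD; congr (_ +i* _); ring. Qed.

Lemma expi_eq_mod2pi x y (k l : nat) :
  x + 2 * pi * k%:R = y + 2 * pi * l%:R -> expi x = expi y.
Proof.
have expi_2pin (u : R) (j : nat) : expi (u + 2 * pi * j%:R) = expi u.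
  have -> : 2 * pi * j%:R = (pi *+ 2) *+ j :> R by rewrite -mulr_natr; ring.
  by rewrite /expi (periodicn (@cosD2pi R)) (periodicn (@sinD2pi R)).
by move=> xy; rewrite -(expi_2pin x k) xy expi_2pin.
Qed.

End expi.

Section complex_integral.
Context {R : realType}.
Local Notation mu := (@lebesgue_measure R).
Implicit Types f g : R -> R[i].

Let integrableZl_EFin (k : R) {u : R -> R} :
  mu.-integrable setT (EFin \o u) -> mu.-integrable setT (EFin \o (fun t => k * u t)).
Proof. exact: (integrableZl measurableT k). Qed.

Definition cintegrable f :=
  mu.-integrable setT (EFin \o (fun t => complex.Re (f t))) /\
  mu.-integrable setT (EFin \o (fun t => complex.Im (f t))).

Lemma cintegrableD f g : cintegrable f -> cintegrable g ->
  cintegrable (fun t => f t + g t).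
Proof.
move=> [f1 f2] [g1 g2]; split.
  by under eq_fun do rewrite complexReD; exact: (integrableD measurableT f1 g1).
by under eq_fun do rewrite complexImD; exact: (integrableD measurableT f2 g2).
Qed.

Lemma cintegrableZ k f : cintegrable f -> cintegrable (fun t => k * f t).
Proof.
move=> [f1 f2]; split.
  under eq_fun do rewrite complexReM.
  exact: (integrableB measurableT (integrableZl_EFin (complex.Re k) f1)
                                   (integrableZl_EFin (complex.Im k) f2)).
under eq_fun do rewrite complexImM.
exact: (integrableD measurableT (integrableZl_EFin (complex.Re k) f2)
                                 (integrableZl_EFin (complex.Im k) f1)).
Qed.

Lemma cintegrable_sum (I : Type) (s : seq I) (F : I -> R -> R[i]) :
  (forall i, cintegrable (F i)) -> cintegrable (fun t => \sum_(i <- s) F i t).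
Proof.
move=> FI; elim: s => [|i s IHs].
  by under eq_fun do rewrite big_nil; split; exact: integrable0.
by under eq_fun do rewrite big_cons; exact: cintegrableD.
Qed.

Lemma cintegrable_subr a f : cintegrable f -> cintegrable (fun t => f (t - a)).
Proof.
by move=> [f1 f2]; split; [exact: (integrable_subr a _ f1) | exact: (integrable_subr a _ f2)].
Qed.

Lemma cintegralD f g : cintegrable f -> cintegrable g ->
  cintegral (fun t => f t + g t) = cintegral f + cintegral g.
Proof.
move=> [f1 f2] [g1 g2]; rewrite /cintegral.
under eq_Rintegral do rewrite complexReD.
under [X in _ +i* X]eq_Rintegral do rewrite complexImD.
by rewrite !RintegralD.
Qed.

Lemma cintegralZ k f : cintegrable f -> cintegral (fun t => k * f t) = k * cintegral f.
Proof.
move=> [f1 f2]; rewrite /cintegral.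
under eq_Rintegral do rewrite complexReM.
under [X in _ +i* X]eq_Rintegral do rewrite complexImM.
rewrite RintegralB ?RintegralD ?RintegralZl //; try exact: integrableZl_EFin.
by case: k => a b /=; congr (_ +i* _); ring.
Qed.

Lemma cintegral_sum (I : Type) (s : seq I) (F : I -> R -> R[i]) :
  (forall i, cintegrable (F i)) ->
  cintegral (fun t => \sum_(i <- s) F i t) = \sum_(i <- s) cintegral (F i).
Proof.
move=> FI; elim: s => [|i s IHs].
  by under eq_fun do rewrite big_nil; rewrite big_nil /cintegral Rintegral_cst // mul0r.
under eq_fun do rewrite big_cons.
by rewrite cintegralD ?big_cons ?IHs //; exact: cintegrable_sum.
Qed.

Lemma cintegral_subr a f : cintegrable f -> cintegral (fun t => f (t - a)) = cintegral f.
Proof.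
move=> [f1 f2]; rewrite /cintegral /Rintegral.
by rewrite -(integral_subr a _ f1) -(integral_subr a _ f2).
Qed.

End complex_integral.

Section square_integrable.
Context {R : realType}.
Implicit Types f g : R -> R[i].

Definition cmeasurable f :=
  measurable_fun setT (fun t => complex.Re (f t)) /\
  measurable_fun setT (fun t => complex.Im (f t)).

Lemma cmeasurableM f g : cmeasurable f -> cmeasurable g -> cmeasurable (fun t => f t * g t).
Proof.
move=> [f1 f2] [g1 g2]; split.
  by under eq_fun do rewrite complexReM; apply: measurable_funB; exact: measurable_funM.
by under eq_fun do rewrite complexImM; apply: measurable_funD; exact: measurable_funM.
Qed.

Lemma cmeasurable_conj f : cmeasurable f -> cmeasurable (fun t => (f t)^*).
Proof.
move=> [f1 f2]; split; first by under eq_fun do rewrite complexReJ.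
by under eq_fun do rewrite complexImJ; exact: measurable_funN.
Qed.

Lemma cmeasurable_expi (th : R -> R) : measurable_fun setT th ->
  cmeasurable (fun t => expi (th t)).
Proof.
move=> mth; split; apply: measurableT_comp mth.
- exact: continuous_measurable_fun (@continuous_cos R).
- exact: continuous_measurable_fun (@continuous_sin R).
Qed.

Lemma L2_subr a g : L2 g -> L2 (fun t => g (t - a)).
Proof.
move=> [g1 g2 gi]; split.
- exact: measurableT_comp g1 (measurable_subr a).
- exact: measurableT_comp g2 (measurable_subr a).
- exact: (integrable_subr a _ gi).
Qed.

Lemma normr_ReIm_mul_conj_expi_le (z w : R[i]) (x : R) :
  `|complex.Re (z * w^* * expi x)| <= sqnormc z + sqnormc w /\
  `|complex.Im (z * w^* * expi x)| <= sqnormc z + sqnormc w.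
Proof.
apply: normr_ReIm_le_sqnormc; rewrite ?sqnormc_ge0 //.
by rewrite !sqnormcM sqnormcJ sqnormc_expi mulr1.
Qed.

Lemma cintegrable_mul_conj_expi f g (th : R -> R) : L2 f -> L2 g ->
  measurable_fun setT th -> cintegrable (fun t => f t * (g t)^* * expi (th t)).
Proof.
move=> [f1 f2 fi] [g1 g2 gi] mth.
have [m1 m2] : cmeasurable (fun t => f t * (g t)^* * expi (th t)).
  apply: cmeasurableM; last exact: cmeasurable_expi.
  by apply: cmeasurableM; [|apply: cmeasurable_conj].
have dom := integrableD measurableT fi gi.
have dom_ge0 t : 0 <= sqnormc (f t) + sqnormc (g t) by rewrite addr_ge0 ?sqnormc_ge0.
have bound t := normr_ReIm_mul_conj_expi_le (f t) (g t) (th t).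
split; apply: (le_integrable measurableT _ _ dom) => [|t _];
  rewrite ?measurable_EFinP //= -?EFinD lee_fin (ger0_norm (dom_ge0 t)).
- exact: (bound t).1.
- exact: (bound t).2.
Qed.

End square_integrable.

Section echo.
Context {R : realType}.
Implicit Types gtx grx : R -> R[i].

Definition xambig_integrand gtx grx (tau nu b : R) : R[i] :=
  gtx b * (grx (b - tau))^* * expi (- (2 * pi * nu * (b - tau))).

Lemma xambigE gtx grx tau nu :
  xambig gtx grx tau nu = cintegral (xambig_integrand gtx grx tau nu).
Proof. by []. Qed.

Lemma cintegrable_xambig_integrand gtx grx tau nu : L2 gtx -> L2 grx ->
  cintegrable (xambig_integrand gtx grx tau nu).
Proof.
move=> htx hrx; apply: cintegrable_mul_conj_expi => //; first exact: L2_subr.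
by apply: measurable_funN; apply: measurable_funM => //; exact: measurable_subr.
Qed.

Lemma echo_phase (Delta a s t : R) (n n' m m' : nat) : Delta != 0 ->
  let T := Delta^-1 in
  expi (2 * pi * m'%:R * Delta * (t - s - n'%:R * T)) * expi (2 * pi * a * t)
    * expi (- (2 * pi * m%:R * Delta * (t - n%:R * T)))
  = expi (2 * pi * a * (n%:R * T)) * expi (- (2 * pi * m'%:R * Delta * s))
    * expi (- (2 * pi * ((m%:R - m'%:R) * Delta - a) * (t - n%:R * T))).
Proof.
move=> D0 T; rewrite !expiD; apply: (@expi_eq_mod2pi _ _ _ (m' * n') (m' * n)).
by rewrite /T !natrM; field.
Qed.

Lemma echo_term gtx grx (alpha x : R[i]) (Delta a s t : R) (n n' m m' : nat) :
  Delta != 0 -> let T := Delta^-1 in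
  alpha * (x * gtx (t - s - n'%:R * T) * expi (2 * pi * m'%:R * Delta * (t - s - n'%:R * T)))
    * expi (2 * pi * a * t) * (grx (t - n%:R * T))^*
    * expi (- (2 * pi * m%:R * Delta * (t - n%:R * T)))
  = alpha * expi (2 * pi * a * (n%:R * T)) * expi (- (2 * pi * m'%:R * Delta * s)) * x
    * xambig_integrand gtx grx ((n%:R - n'%:R) * T - s) ((m%:R - m'%:R) * Delta - a)
        (t - (s + n'%:R * T)).
Proof.
move=> D0 T; rewrite /xambig_integrand.
have -> : t - (s + n'%:R * T) - ((n%:R - n'%:R) * T - s) = t - n%:R * T by ring.
have -> : t - (s + n'%:R * T) = t - s - n'%:R * T by ring.
transitivity (alpha * x * gtx (t - s - n'%:R * T) * (grx (t - n%:R * T))^*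
  * (expi (2 * pi * m'%:R * Delta * (t - s - n'%:R * T)) * expi (2 * pi * a * t)
     * expi (- (2 * pi * m%:R * Delta * (t - n%:R * T))))); first by ring.
by rewrite echo_phase //; ring.
Qed.

End echo.

Local Close Scope classical_set_scope.

Theorem proposition1 (R : realType) (M N : nat) (hM : (0 < M)%N) (hN : (0 < N)%N)
  (Delta c lam v : R) (alpha : R[i])
  (hDelta : 0 < Delta) (hc : 0 < c) (hlam : 0 < lam)
  (gtx grx : R -> R[i]) (htx : L2 gtx) (hrx : L2 grx)
  (X : 'I_N -> 'I_M -> R[i]) (r : R -> R) (n : 'I_N) (m : 'I_M) :
  let T := Delta^-1 in
  YTF grx (ysig alpha gtx X Delta T c lam v r) Delta T n m
  = \sum_(n' < N) \sum_(m' < M)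
      Hcoef alpha gtx grx Delta T c lam v r n m n' m' * X n' m'.
Proof.
move=> T; have D0 : Delta != 0 by rewrite gt_eqF.
pose s (n' : 'I_N) := r (n'%:R * T) / c.
pose G (n' : 'I_N) (m' : 'I_M) := xambig_integrand gtx grx
  ((n%:R - n'%:R) * T - s n') ((m%:R - m'%:R) * Delta - v / lam).
pose K (n' : 'I_N) (m' : 'I_M) := alpha * expi (2 * pi * (v / lam) * (n%:R * T))
  * expi (- (2 * pi * m'%:R * Delta * s n')) * X n' m'.
have term_integrable n' m' : cintegrable (fun t => K n' m' * G n' m' (t - (s n' + n'%:R * T))).
  by apply/cintegrableZ/cintegrable_subr/cintegrable_xambig_integrand.
rewrite /YTF (_ : (fun t => _) = fun t => \sum_(n' < N) \sum_(m' < M)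
                   K n' m' * G n' m' (t - (s n' + n'%:R * T))); last first.
  apply/funext => t; rewrite /ysig /xsig !big_distrl; apply: eq_bigr => n' _ /=.
  rewrite big_distrr !big_distrl; apply: eq_bigr => m' _ /=.
  exact: echo_term.
rewrite cintegral_sum => [|n']; last exact: cintegrable_sum.
apply: eq_bigr => n' _; rewrite cintegral_sum //; apply: eq_bigr => m' _.
rewrite cintegralZ; last exact/cintegrable_subr/cintegrable_xambig_integrand.
rewrite cintegral_subr; last exact: cintegrable_xambig_integrand.
by rewrite /Hcoef xambigE /K mulrAC.
Qed.
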